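(* Let $G$ be a finite group, $X\subseteq G$ a conjugacy class, and $V=\Bbbk X$ a Yetter–Drinfeld module over $\Bbbk G$ with basis $\{v_x\}_{x\in X}$, $v_x$ homogeneous of $G$-degree $x$, and $g\cdot v_y\in\Bbbk^\times v_{gyg^{-1}}$; let $q\colon X\times X\to\Bbbk^\times$ be the corresponding cocycle, defined by $x\cdot v_y=q(x,y)v_{x\triangleright y}$, so that the braiding is $c_q(v_x\otimes v_y)=q(x,y)\,v_{x\triangleright y}\otimes v_x$. Let $q'$ be a cocycle on $X$ twist-equivalent to $q$, and let $\mathcal B(X,q)$, $\mathcal B(X,q')$ be the Nichols algebras of $(\Bbbk X,c_q)$ and $(\Bbbk X,c_{q'})$. Then for every $d\in\mathbb N$ (with $d\ge2$), $\mathcal B(X,q)\cong\widehat{\mathcal B(X,q)}_d$ if and only if $\mathcal B(X,q')\cong\widehat{\mathcal B(X,q')}_d$, where the isomorphisms are the natural projections.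
   Context: A rack $(X,\triangleright)$ is a nonempty set with a binary operation such that each $x\triangleright-$ is bijective and $x\triangleright(y\triangleright z)=(x\triangleright y)\triangleright(x\triangleright z)$; here $x\triangleright y=xyx^{-1}$ in $G$. A $2$-cocycle of degree $1$ on $X$ is $q\colon X\times X\to\Bbbk^\times$ with $q(x,y\triangleright z)q(y,z)=q(x\triangleright y,x\triangleright z)q(x,z)$. Two such cocycles $q,q'$ on $X\subseteq G$ are twist-equivalent if there is a group $2$-cocycle $\sigma\colon G\times G\to\Bbbk^\times$ (i.e. $\sigma(x,y)\sigma(xy,z)=\sigma(y,z)\sigma(x,yz)$, $\sigma(x,1)=\sigma(1,x)=1$) with $q'(x,y)=\sigma(x,y)q(x,y)\sigma(x\triangleright y,x)^{-1}$ for all $x,y\in X$. For a vector space $V$ with a solution $c$ of the braid equation, $B_n$ (braid group with generators $\sigma_1,\dots,\sigma_{n-1}$) acts on $V^{\otimes n}$ by $\rho_n(\sigma_i)=\mathrm{id}^{\otimes(i-1)}\otimes c\otimes\mathrm{id}^{\otimes(n-i-1)}$; the Matsumoto section $M_n\colon\mathbb S_n\to B_n$ sends a reduced expression $s_{i_1}\cdots s_{i_l}$ to $\sigma_{i_1}\cdots\sigma_{i_l}$; the quantum symmetrizer is $Q_n=\sum_{w\in\mathbb S_n}\rho_n(M_n(w))$. The Nichols algebra is $\mathcal B(V,c)=T(V)/\bigoplus_{n\ge2}\ker Q_n$ (a connected bialgebra with $V$ primitive). For a connected bialgebra $B=T(B_1)/J$ generated in degree $1$ ($J$ a graded ideal and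 coideal in degrees $\ge2$), the $d$-atic cover is $\widehat B_d=T(B_1)/\big(\bigoplus_{m=2}^d(J\cap B_1^{\otimes m})\big)$ (quotient by the generated ideal); for $B=\mathcal B(V,c)$, $J\cap V^{\otimes m}=\ker Q_m$. *)

From HB Require Import structures.
From mathcomp Require Import all_boot all_order all_algebra all_fingroup.
Set Implicit Arguments. Unset Strict Implicit. Unset Printing Implicit Defensive.
Import GRing.Theory.
Local Open Scope ring_scope.

Section Nichols.
Variables (gT : finGroupType) (k : fieldType).

Definition rtr (x y : gT) : gT := (x * y * x^-1)%g.

Definition rack_cocycle (X : {set gT}) (q : gT -> gT -> k) : Prop :=
  (forall x y, x \in X -> y \in X -> q x y != 0) /\
  (forall x y z, x \in X -> y \in X -> z \in X ->
     q x (rtr y z) * q y z = q (rtr x y) (rtr x z) * q x z).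

(* q comes from a Yetter-Drinfeld module kX over kG with basis v_x of degree x
   and g . v_y = act g y v_{g y g^-1}, act g y <> 0; q(x,y) = act x y. *)
Definition YD_cocycle (X : {set gT}) (q : gT -> gT -> k) : Prop :=
  exists act : gT -> gT -> k,
    [/\ forall g y, y \in X -> act g y != 0,
        forall y, y \in X -> act 1%g y = 1,
        forall g h y, y \in X -> act (g * h)%g y = act g (rtr h y) * act h y
      & forall x y, x \in X -> y \in X -> q x y = act x y].

Definition group_2cocycle (s : gT -> gT -> k) : Prop :=
  [/\ forall x y, s x y != 0,
      forall x y z, s x y * s (x * y)%g z = s y z * s x (y * z)%g
    & forall x, s x 1%g = 1 /\ s 1%g x = 1].

Definition twist_equiv (X : {set gT}) (q q' : gT -> gT -> k) : Prop :=
  exists s : gT -> gT -> k, group_2cocycle s /\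
    forall x y, x \in X -> y \in X ->
      q' x y = s x y * q x y / s (rtr x y) x.

(* Tensor powers: an element of V^{(x)n} (V = kX) is a function on words,
   supported on words of length n with letters in X. *)
Definition inX (X : {set gT}) (w : seq gT) : bool := all (fun x => x \in X) w.

Definition homog (X : {set gT}) (n : nat) (f : seq gT -> k) : Prop :=
  forall w, f w != 0 -> (size w == n) && inX X w.

(* rho(sigma_i) = id^{(i)} (x) c_q (x) id : acts on positions i, i+1 (0-based).
   c_q(v_x (x) v_y) = q(x,y) v_{x|>y} (x) v_x, hence the coefficient of the
   word (..,a,b,..) in c_q f is q(b, b^-1 a b) f(.., b, b^-1 a b, ..). *)
Definition sigma (q : gT -> gT -> k) (i : nat) (f : seq gT -> k) : seq gT -> k :=
  fun u => if (i.+1 < size u)%N then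
             let a := nth 1%g u i in let b := nth 1%g u i.+1 in
             let y := (b^-1 * a * b)%g in
             q b y * f (set_nth 1%g (set_nth 1%g u i b) i.+1 y)
           else f u.

Definition adj (n i : nat) : 'S_n :=
  match insub i, insub i.+1 with
  | Some a, Some b => tperm a b
  | _, _ => 1%g
  end.

Definition prod_adj (n : nat) (t : seq nat) : 'S_n :=
  foldr (fun j acc => (adj n j * acc)%g) 1%g t.

Definition perm_length (n : nat) (w : 'S_n) : nat :=
  #|[set p : 'I_n * 'I_n | (p.1 < p.2)%N && (w p.2 < w p.1)%N]|.

(* rho_n(M_n(w)), M_n the Matsumoto section, computed on a (chosen) reduced
   expression of w *)
Definition rhoM (q : gT -> gT -> k) (n : nat) (w : 'S_n) (f : seq gT -> k)
  : seq gT -> k :=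
  match [pick t : (perm_length w).-tuple 'I_n.-1 |
          prod_adj n (map (@nat_of_ord _) t) == w] with
  | Some t => foldr (fun j g => sigma q (nat_of_ord j) g) f t
  | None => f
  end.

Definition Qn (q : gT -> gT -> k) (n : nat) (f : seq gT -> k) : seq gT -> k :=
  fun u => \sum_(w : 'S_n) rhoM q w f u.

(* degree n component of J = (+)_{n>=2} ker Q_n *)
Definition J_comp (q : gT -> gT -> k) (n : nat) (f : seq gT -> k) : Prop :=
  if (n < 2)%N then forall w, f w = 0 else forall w, Qn q n f w = 0.

(* e_u (x) g (x) e_v for g homogeneous of degree m *)
Definition tens (u : seq gT) (m : nat) (g : seq gT -> k) (v : seq gT)
  : seq gT -> k :=
  fun w => if [&& size w == (size u + m + size v)%N, take (size u) w == u
                & drop (size u + m) w == v]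
           then g (take m (drop (size u) w)) else 0.

(* the two-sided ideal of T(V) generated by (+)_{m=2}^d ker Q_m *)
Inductive ideal_d (X : {set gT}) (q : gT -> gT -> k) (d : nat)
  : (seq gT -> k) -> Prop :=
| idl_zero : ideal_d X q d (fun _ => 0)
| idl_add f g : ideal_d X q d f -> ideal_d X q d g ->
                ideal_d X q d (fun w => f w + g w)
| idl_ext f g : ideal_d X q d f -> (forall w, f w = g w) -> ideal_d X q d g
| idl_gen u m g v : (2 <= m <= d)%N -> inX X u -> inX X v -> homog X m g ->
                    (forall w, Qn q m g w = 0) ->
                    ideal_d X q d (tens u m g v).

(* B(X,q) = \hat B(X,q)_d via the natural projection, i.e. the ideal generated
   by the components of J of degree 2..d equals J (degreewise). *)
Definition nichols_dgen (X : {set gT}) (q : gT -> gT -> k) (d : nat) : Prop :=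
  forall n (f : seq gT -> k), homog X n f -> (J_comp q n f <-> ideal_d X q d f).

End Nichols.

From HB Require Import structures.
From mathcomp Require Import all_boot all_order all_algebra all_fingroup.
From mathcomp Require Import ring.
Set Implicit Arguments. Unset Strict Implicit. Unset Printing Implicit Defensive.

(* A group 2-cocycle s gives each word x_1 ... x_n the nonzero weight
   prod_i s(x_1 ... x_(i-1), x_i).  The cocycle identity shows that rescaling
   tensors by this weight intertwines the braidings c_q' and c_q, hence the
   quantum symmetrizers, so ker Q_n for q' corresponds to ker Q_n for q.
   Since the weight of u z v only depends on u, v and the G-degree of z, the
   rescaling also maps the ideal generated by the kernels in degrees 2..d for
   q onto that for q' (after splitting generators into G-homogeneous parts).
   Twist-equivalence is symmetric (use s^-1), giving both implications. *)

Import GRing.Theory.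
Local Open Scope ring_scope.

Section Words.
Variables (gT : finGroupType) (k : fieldType).
Implicit Types (q : gT -> gT -> k) (f g : seq gT -> k) (u w : seq gT).

Definition word_prod w : gT := foldr (fun x acc => x * acc)%g 1%g w.

Lemma word_prod_cat u w : word_prod (u ++ w) = (word_prod u * word_prod w)%g.
Proof. by elim: u => [|x u IH] /=; rewrite ?mul1g // IH mulgA. Qed.

Lemma mulg_conjV (a b : gT) : (b * (b^-1 * a * b) = a * b)%g.
Proof. by rewrite !mulgA mulgV mul1g. Qed.

Lemma rtr_conjV (a b : gT) : rtr b (b^-1 * a * b)%g = a.
Proof. by rewrite /rtr mulg_conjV mulgK. Qed.

Lemma word_prod_braid pre (a b : gT) post :
  word_prod (pre ++ b :: (b^-1 * a * b)%g :: post) =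
  word_prod (pre ++ a :: b :: post).
Proof.
by rewrite !word_prod_cat /=; congr (_ * _)%g; rewrite mulgA mulg_conjV mulgA.
Qed.

Lemma split_adjacent u i : (i.+1 < size u)%N ->
  exists pre a b post, size pre = i /\ u = pre ++ a :: b :: post.
Proof.
elim: u i => [|x u IH] [|i] //=.
- by case: u IH => [|y u'] //= _ _; exists [::], x, y, u'.
- move=> /IH [pre [a [b [post [<- ->]]]]].
  by exists (x :: pre), a, b, post.
Qed.

Lemma sigmaE q i f pre (a b : gT) post : size pre = i ->
  sigma q i f (pre ++ a :: b :: post) =
  q b (b^-1 * a * b)%g * f (pre ++ b :: (b^-1 * a * b)%g :: post).
Proof.
move=> <-; rewrite /sigma size_cat /= addnS addnS ltnS ltnS leq_addr.
congr (_ * _); first by elim: pre.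
by congr f; elim: pre => //= x pre ->.
Qed.

Lemma sigma_out q i f u : ~~ (i.+1 < size u)%N -> sigma q i f u = f u.
Proof. by rewrite /sigma => /negbTE ->. Qed.

Lemma eq_sigma q i f g : f =1 g -> sigma q i f =1 sigma q i g.
Proof. by move=> fg u; rewrite /sigma !fg. Qed.

Lemma sigma_scale_prod q i f (F : gT -> k) u :
  sigma q i (fun w => F (word_prod w) * f w) u = F (word_prod u) * sigma q i f u.
Proof.
have [/split_adjacent [pre [a [b [post [<- ->]]]]]|] := ltnP i.+1 (size u).
  by rewrite !sigmaE // word_prod_braid mulrCA.
by rewrite leqNgt => out; rewrite !sigma_out.
Qed.

Definition sigmas q (t : seq nat) f := foldr (fun i g => sigma q i g) f t.

Lemma eq_sigmas q t f g : f =1 g -> sigmas q t f =1 sigmas q t g.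
Proof. by elim: t => //= i t IH fg; apply/eq_sigma/IH. Qed.

Lemma sigmas_scale_prod q t f (F : gT -> k) u :
  sigmas q t (fun w => F (word_prod w) * f w) u = F (word_prod u) * sigmas q t f u.
Proof. by elim: t u => //= i t IH u; rewrite -sigma_scale_prod; apply: eq_sigma. Qed.

Lemma rhoM_sigmas n (w : 'S_n) :
  exists t, forall q f, rhoM q w f = sigmas q t f.
Proof.
rewrite /rhoM; case: pickP => [t _|_]; last by exists [::].
by exists (map val t) => q f; rewrite /sigmas foldr_map.
Qed.

Lemma eq_Qn q n f g : f =1 g -> Qn q n f =1 Qn q n g.
Proof.
move=> fg u; apply: eq_bigr => w _; have [t Ht] := rhoM_sigmas w.
by rewrite !Ht; apply: eq_sigmas.
Qed.

Lemma Qn_scale_prod q n f (F : gT -> k) u :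
  Qn q n (fun w => F (word_prod w) * f w) u = F (word_prod u) * Qn q n f u.
Proof.
rewrite /Qn mulr_sumr; apply: eq_bigr => w _; have [t Ht] := rhoM_sigmas w.
by rewrite !Ht sigmas_scale_prod.
Qed.

Definition degree_part (h : gT) f :=
  fun z => (if word_prod z == h then 1 else 0) * f z.

Lemma tens_degree_sum u m g v w :
  tens u m g v w = \sum_(h : gT) tens u m (degree_part h g) v w.
Proof.
rewrite /tens; case: ifP => _; last by rewrite big1.
rewrite (bigD1 (word_prod (take m (drop (size u) w)))) //= /degree_part.
rewrite eqxx mul1r big1 ?addr0 // => h.
by rewrite eq_sym => /negbTE ->; rewrite mul0r.
Qed.

Lemma tens_support_cat u m v w :
  [&& size w == (size u + m + size v)%N, take (size u) w == u
    & drop (size u + m) w == v] ->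
  w = u ++ take m (drop (size u) w) ++ v.
Proof.
case/and3P=> _ /eqP takeu /eqP dropv.
rewrite -{1}(cat_take_drop (size u) w) -{1}(cat_take_drop m (drop (size u) w)).
by rewrite drop_drop addnC dropv takeu.
Qed.

Lemma ideal_d_sum X q d (r : seq gT) (F : gT -> seq gT -> k) :
  (forall h, ideal_d X q d (F h)) ->
  ideal_d X q d (fun w => \sum_(h <- r) F h w).
Proof.
move=> idF; elim: r => [|h r IH].
  by apply: idl_ext (idl_zero _ _ _) _ => w; rewrite big_nil.
by apply: idl_ext (idl_add (idF h) IH) _ => w; rewrite big_cons.
Qed.

End Words.

Section Cocycle.
Variables (gT : finGroupType) (k : fieldType) (s : gT -> gT -> k).
Hypothesis s_cocycle : group_2cocycle s.

Lemma cocycle_neq0 x y : s x y != 0. Proof. by case: s_cocycle. Qed.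

Lemma cocycle_assoc x y z : s x y * s (x * y)%g z = s y z * s x (y * z)%g.
Proof. by case: s_cocycle. Qed.

Lemma cocycle_x1 x : s x 1%g = 1. Proof. by case: s_cocycle => _ _ /(_ x) []. Qed.

Lemma group_2cocycleV : group_2cocycle (fun x y => (s x y)^-1).
Proof.
split=> [x y|x y z|x]; first by rewrite invr_eq0 cocycle_neq0.
  by rewrite -!invfM cocycle_assoc.
by case: s_cocycle => _ _ /(_ x) [-> ->]; rewrite invr1.
Qed.

End Cocycle.

Section Weight.
Variables (gT : finGroupType) (k : fieldType) (s : gT -> gT -> k).
Implicit Types (f g : seq gT -> k) (u w : seq gT).

Fixpoint weight_from (a : gT) w : k :=
  if w is x :: w' then s a x * weight_from (a * x)%g w' else 1.

Definition weight w := weight_from 1%g w.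

Definition rescale f := fun w => weight w * f w.

Lemma weight_from_cat a u w :
  weight_from a (u ++ w) = weight_from a u * weight_from (a * word_prod u)%g w.
Proof.
elim: u a => [|x u IH] a /=; first by rewrite mulg1 mul1r.
by rewrite IH mulrA mulgA.
Qed.

Hypothesis s_cocycle : group_2cocycle s.

Lemma weight_from_neq0 a w : weight_from a w != 0.
Proof.
elim: w a => [|x w IH] a /=; first exact: oner_neq0.
by rewrite mulf_neq0 ?(cocycle_neq0 s_cocycle).
Qed.

Lemma weight_neq0 w : weight w != 0. Proof. exact: weight_from_neq0. Qed.

Lemma weight_fromE a w : weight_from a w = weight w * s a (word_prod w).
Proof.
suff shift b :
    s a b * weight_from (a * b)%g w = weight_from b w * s a (b * word_prod w)%g.
  by move: (shift 1%g); rewrite (cocycle_x1 s_cocycle) mul1r mulg1 mul1g.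
elim: w b => [|x w IH] b /=; first by rewrite mulg1 mul1r mulr1.
by rewrite mulrA (cocycle_assoc s_cocycle) -mulrA -mulgA IH mulrA mulgA -mulgA.
Qed.

Lemma weight_braid pre (a b : gT) post :
  weight (pre ++ a :: b :: post) * s b (b^-1 * a * b)%g =
  weight (pre ++ b :: (b^-1 * a * b)%g :: post) * s a b.
Proof.
rewrite /weight !weight_from_cat /=.
set p := (1 * word_prod pre)%g; set y := (b^-1 * a * b)%g.
have -> : (p * b * y = p * a * b)%g by rewrite -!mulgA mulg_conjV.
have Ea := cocycle_assoc s_cocycle p a b; have Eb := cocycle_assoc s_cocycle p b y.
rewrite /y mulg_conjV -/y in Eb.
transitivity (weight_from 1 pre * (s p a * s (p * a)%g b) *
              weight_from (p * a * b) post * s b y); first by ring.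
rewrite Ea; transitivity (weight_from 1 pre * (s p b * s (p * b)%g y) *
              weight_from (p * a * b) post * s a b); last by ring.
by rewrite Eb; ring.
Qed.

Definition outer_weight u (h : gT) v :=
  weight u * s (word_prod u) h * weight_from (word_prod u * h) v.

Lemma outer_weight_neq0 u h v : outer_weight u h v != 0.
Proof.
by rewrite !mulf_neq0 ?weight_neq0 ?weight_from_neq0 ?(cocycle_neq0 s_cocycle).
Qed.

Lemma weight_cat3 u z v :
  weight (u ++ z ++ v) = outer_weight u (word_prod z) v * weight z.
Proof.
rewrite {1}/weight !weight_from_cat mul1g (weight_fromE (word_prod u) z).
by rewrite -[weight_from 1%g u]/(weight u) /outer_weight; ring.
Qed.

Lemma tens_unweight u m g v (h : gT) :
  (forall z, g z != 0 -> word_prod z = h) ->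
  forall w, tens u m g v w / weight w =
    tens u m (fun z => (outer_weight u h v)^-1 * (g z / weight z)) v w.
Proof.
move=> gh w; rewrite /tens.
case: ifP => [/tens_support_cat Ew|_]; last by rewrite mul0r.
set z := take m (drop (size u) w) in Ew *.
have [gz0|/gh hz] := eqVneq (g z) 0; first by rewrite gz0 !mul0r mulr0.
have := weight_neq0 z; have := outer_weight_neq0 u h v.
by rewrite Ew weight_cat3 hz => ow0 wz0; field; rewrite ow0 wz0.
Qed.

End Weight.

Lemma weight_fromV (gT : finGroupType) (k : fieldType) (s : gT -> gT -> k) a w :
  weight_from (fun x y => (s x y)^-1) a w = (weight_from s a w)^-1.
Proof. by elim: w a => [|x w IH] a /=; rewrite ?invr1 // IH invfM. Qed.

Section Twist.
Variables (gT : finGroupType) (k : fieldType) (X : {set gT}).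
Variables (s q q' : gT -> gT -> k).
Hypothesis X_rtr_closed : forall b y, y \in X -> rtr b y \in X.
Hypothesis s_cocycle : group_2cocycle s.
Hypothesis q'_twist : forall x y, x \in X -> y \in X ->
  q' x y = s x y * q x y / s (rtr x y) x.
Implicit Types (f g : seq gT -> k) (u w : seq gT).

Definition supp_inX f := forall w, f w != 0 -> inX X w.

Lemma supp_inX_sigma q0 i f : supp_inX f -> supp_inX (sigma q0 i f).
Proof.
move=> fX u; have [|] := ltnP i.+1 (size u).
  case/split_adjacent=> pre [a [b [post [<- ->]]]].
  rewrite sigmaE // mulf_eq0 negb_or => /andP [_ /fX].
  rewrite /inX !all_cat /= => /andP [-> /and3P [-> Xy ->]].
  by rewrite -(rtr_conjV a b) X_rtr_closed.
by rewrite leqNgt => /sigma_out ->; apply: fX.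
Qed.

Lemma supp_inX_sigmas q0 t f : supp_inX f -> supp_inX (sigmas q0 t f).
Proof. by elim: t => //= i t IH /IH; apply: supp_inX_sigma. Qed.

Lemma sigma_twist i f : supp_inX f ->
  forall u, weight s u * sigma q' i f u = sigma q i (rescale s f) u.
Proof.
move=> fX u; have [|] := ltnP i.+1 (size u); last first.
  by rewrite leqNgt => out; rewrite !sigma_out.
case/split_adjacent=> pre [a [b [post [<- ->]]]]; rewrite !sigmaE // /rescale.
set y := (b^-1 * a * b)%g; set u' := pre ++ b :: y :: post.
have [->|/fX] := eqVneq (f u') 0; first by rewrite !mulr0.
rewrite /inX all_cat /= => /andP [_ /and3P [Xb Xy _]].
rewrite q'_twist // rtr_conjV.
have := weight_braid s_cocycle pre a b post; rewrite -/y -/u' => braid.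
have sab := cocycle_neq0 s_cocycle a b; have sby := cocycle_neq0 s_cocycle b y.
have -> : weight s (pre ++ a :: b :: post) = weight s u' * s a b / s b y.
  by rewrite -braid mulfK.
by field; rewrite sab sby.
Qed.

Lemma sigmas_twist t f : supp_inX f ->
  forall u, weight s u * sigmas q' t f u = sigmas q t (rescale s f) u.
Proof.
move=> fX; elim: t => //= i t IH u.
rewrite sigma_twist; last exact: supp_inX_sigmas.
by apply: eq_sigma.
Qed.

Lemma Qn_twist n f : supp_inX f ->
  forall u, weight s u * Qn q' n f u = Qn q n (rescale s f) u.
Proof.
move=> fX u; rewrite /Qn mulr_sumr; apply: eq_bigr => w _.
by have [t Ht] := rhoM_sigmas gT k w; rewrite !Ht sigmas_twist.
Qed.

Lemma homog_supp_inX n f : homog X n f -> supp_inX f.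
Proof. by move=> fn w /fn /andP []. Qed.

Lemma J_comp_twist n f : homog X n f ->
  J_comp q' n f <-> J_comp q n (rescale s f).
Proof.
move=> /homog_supp_inX fX; have w0 := weight_neq0 s_cocycle.
rewrite /J_comp; case: ifP => _; split=> J0 w.
- by rewrite /rescale J0 mulr0.
- by apply: (mulfI (w0 w)); rewrite mulr0; apply: J0.
- by rewrite -Qn_twist // J0 mulr0.
- by apply: (mulfI (w0 w)); rewrite mulr0 Qn_twist.
Qed.

Variable d : nat.

Lemma ideal_unweight_gen (h : gT) u m g v :
  (2 <= m <= d)%N -> inX X u -> inX X v -> homog X m g ->
  (forall w, Qn q m g w = 0) ->
  ideal_d X q' d (fun w => tens u m (degree_part h g) v w / weight s w).
Proof.
move=> md Xu Xv gm Qg0; set C := outer_weight s u h v.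
pose g' z := C^-1 * (degree_part h g z / weight s z).
have g'm : homog X m g'.
  move=> z g'z; apply: gm; apply: contraNneq g'z => gz0.
  by rewrite /g' /degree_part gz0 !mulr0 mul0r mulr0.
have Qg'0 w : Qn q' m g' w = 0.
  apply: (mulfI (weight_neq0 s_cocycle w)).
  rewrite mulr0 Qn_twist; last exact: homog_supp_inX g'm.
  pose F (x : gT) := C^-1 * (if x == h then 1 else 0).
  rewrite (@eq_Qn _ _ q m _ (fun z => F (word_prod z) * g z)).
    by rewrite Qn_scale_prod Qg0 mulr0.
  move=> z; rewrite /rescale /g' /degree_part /F mulrCA [weight s z * _]mulrC.
  by rewrite divfK ?weight_neq0 // mulrA.
have gh z : degree_part h g z != 0 -> word_prod z = h.
  by rewrite /degree_part; case: (eqVneq (word_prod z) h) => // _; rewrite mul0r eqxx.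
apply: idl_ext (idl_gen md Xu Xv g'm Qg'0) _ => w.
by rewrite (tens_unweight s_cocycle u m v gh).
Qed.

Lemma ideal_unweight g :
  ideal_d X q d g -> ideal_d X q' d (fun w => g w / weight s w).
Proof.
elim=> {g} [|f g _ IHf _ IHg|f g _ IH fg|u m g v md Xu Xv gm Qg0].
- by apply: idl_ext (idl_zero _ _ _) _ => w; rewrite mul0r.
- by apply: idl_ext (idl_add IHf IHg) _ => w; rewrite mulrDl.
- by apply: idl_ext IH _ => w; rewrite fg.
- apply: idl_ext (ideal_d_sum (index_enum gT)
    (fun h => ideal_unweight_gen h md Xu Xv gm Qg0)) _ => w.
  by rewrite tens_degree_sum mulr_suml.
Qed.

End Twist.

Lemma twist_relV (gT : finGroupType) (k : fieldType) (X : {set gT})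
    (s q q' : gT -> gT -> k) :
  group_2cocycle s ->
  (forall x y, x \in X -> y \in X -> q' x y = s x y * q x y / s (rtr x y) x) ->
  forall x y, x \in X -> y \in X ->
    q x y = (s x y)^-1 * q' x y / (s (rtr x y) x)^-1.
Proof.
move=> s_cocycle q'_twist x y Xx Xy; rewrite q'_twist //.
have := cocycle_neq0 s_cocycle x y; have := cocycle_neq0 s_cocycle (rtr x y) x.
by move=> s1 s2; field; rewrite s1 s2 oner_neq0.
Qed.

Lemma nichols_dgen_twist (gT : finGroupType) (k : fieldType) (X : {set gT})
    (s q q' : gT -> gT -> k) (d : nat) :
  (forall b y, y \in X -> rtr b y \in X) -> group_2cocycle s ->
  (forall x y, x \in X -> y \in X -> q' x y = s x y * q x y / s (rtr x y) x) ->
  nichols_dgen X q d -> nichols_dgen X q' d.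
Proof.
move=> X_rtr_closed s_cocycle q'_twist Bq n f fn.
have sf_n : homog X n (rescale s f).
  move=> w sfw; apply: fn; apply: contraNneq sfw.
  by rewrite /rescale => ->; rewrite mulr0.
rewrite (J_comp_twist X_rtr_closed s_cocycle q'_twist fn) (Bq n _ sf_n); split.
- move=> /(ideal_unweight X_rtr_closed s_cocycle q'_twist) I; apply: idl_ext I _ => w.
  by rewrite /rescale mulrC mulKf ?weight_neq0.
- move=> /(ideal_unweight X_rtr_closed (group_2cocycleV s_cocycle)
            (twist_relV s_cocycle q'_twist)) I; apply: idl_ext I _ => w.
  by rewrite /weight weight_fromV invrK mulrC.
Qed.

Lemma class_rtr_closed (gT : finGroupType) (X : {set gT}) :
  X \in classes [set: gT] -> forall b y, y \in X -> rtr b y \in X.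
Proof.
case/imsetP=> x _ -> b y xy; have -> : rtr b y = (y ^ b^-1)%g.
  by rewrite /rtr conjgE invgK mulgA.
by rewrite -(class_eqP xy) memJ_class ?inE.
Qed.

Theorem mainTheorem15 (gT : finGroupType) (k : fieldType) (X : {set gT})
  (q q' : gT -> gT -> k) (d : nat) :
  X \in classes [set: gT] ->
  YD_cocycle X q ->
  rack_cocycle X q' ->
  twist_equiv X q q' ->
  (2 <= d)%N ->
  (nichols_dgen X q d <-> nichols_dgen X q' d).
Proof.
move=> /class_rtr_closed X_rtr_closed _ _ [s [s_cocycle q'_twist]] _.
split; first exact: nichols_dgen_twist X_rtr_closed s_cocycle q'_twist.
exact: nichols_dgen_twist X_rtr_closed (group_2cocycleV s_cocycle)
  (twist_relV s_cocycle q'_twist).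
Qed.
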